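(* Let $n,m$ be positive integers, $\lambda\in\mathcal{P}^m_n$, and let $k_{i,j}=k_{i,j}(\lambda)$ be defined recursively by $$k_{i,j}=\min\left\{m,\left\lceil\frac{\lambda_i-\sum_{\ell=j+1}^n k_{i,\ell}+\sum_{\ell=i+1}^j k_{\ell,j}}{j-i+1}\right\rceil\right\},\quad 1\le i\le j\le n.$$ Then $k_{i,j}\ge k_{i+1,j}$ for all $1\le i<j\le n$.
   Context: $\mathcal{P}^m_n$ is the set of integer partitions $(\lambda_1\ge\cdots\ge\lambda_n\ge0)$ with $\lambda_i\le m(n-i+1)$ for all $i$. The recursion is carried out in order of decreasing $i$ and, for fixed $i$, decreasing $j$. *)

From mathcomp Require Import all_boot all_order all_algebra.
Set Implicit Arguments. Unset Strict Implicit. Unset Printing Implicit Defensive.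
Import Order.TTheory GRing.Theory Num.Theory.
Local Open Scope ring_scope.

(* ceiling of a / d (intended for d > 0), via floor division of intdiv *)
Definition ceilz (a d : int) : int := - ((- a) %/ d)%Z.

(* lambda is given as lam : nat -> nat, with lam i = lambda_i for 1 <= i <= n *)
Definition in_Pmn (n m : nat) (lam : nat -> nat) : Prop :=
  (forall i, (1 <= i < n)%N -> (lam i.+1 <= lam i)%N) /\
  (forall i, (1 <= i <= n)%N -> (lam i <= m * (n - i + 1))%N).

Section K.
Variables (n m : nat) (lam : nat -> nat).

(* the defining formula for k_{i,j}, given the already computed entries
   r l = k_{i,l} (l > j) of row i and K l j = k_{l,j} (l > i) *)
Definition kform (K : nat -> nat -> int) (i : nat) (r : nat -> int) (j : nat)
  : int :=
  Order.min (m%:Z)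
    (ceilz ((lam i)%:Z - (\sum_(j.+1 <= l < n.+1) r l)
              + (\sum_(i.+1 <= l < j.+1) K l j))
           (j%:Z - i%:Z + 1)).

(* row i, computed for j = n, n-1, ..., n-d+1 (decreasing j) *)
Fixpoint krow (K : nat -> nat -> int) (i : nat) (d : nat) : nat -> int :=
  match d with
  | 0 => fun _ => 0
  | d'.+1 => let r := krow K i d' in
             fun j => if j == (n - d')%N then kform K i r j else r j
  end.

(* rows n, n-1, ..., n-e+1 (decreasing i) *)
Fixpoint ktab (e : nat) : nat -> nat -> int :=
  match e with
  | 0 => fun _ _ => 0
  | e'.+1 => let K := ktab e' in
             fun a b => if a == (n - e')%N then krow K (n - e') n.+1 b
                        else K a b
  end.

Definition kij (i j : nat) : int := ktab n i j.
End K.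

(** Compare rows i and i+1 of the table column by column, from j = n down.
    With S_r(j) = sum_{l > j} k_{r,l}, let s_j be the excess of the
    numerator lam_i - S_i(j) over lam_{i+1} - S_{i+1}(j).  The numerator of
    k_{i,j} is that of k_{i+1,j} plus s_j plus the extra term k_{i+1,j}, over a
    denominator larger by one; as long as s_j >= 0 this forces
    k_{i+1,j} <= k_{i,j} <= k_{i+1,j} + s_j.  The right inequality is exactly
    s_{j-1} = s_j - k_{i,j} + k_{i+1,j} >= 0, and s_n = lam_i - lam_{i+1} >= 0
    starts the induction. *)

From mathcomp Require Import all_boot all_order all_algebra.
From mathcomp Require Import zify ring.
Import Order.TTheory GRing.Theory Num.Theory.
Local Open Scope ring_scope.

Lemma ceilz_le (a d x : int) : 0 < d -> (ceilz a d <= x) = (a <= x * d).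
Proof. by move=> d_gt0; rewrite /ceilz lerNl lez_divRL // mulNr lerN2. Qed.

Lemma le_ceilz (a d x : int) : 0 < d -> (x <= ceilz a d) = ((x - 1) * d < a).
Proof.
move=> d_gt0; rewrite /ceilz lerNr -ltzD1 ltz_divLR //.
have -> : (- x + 1) * d = - ((x - 1) * d) by ring.
by rewrite ltrN2.
Qed.

Lemma min_ceilz_shift (m a s d : int) : 0 < d -> 0 <= s ->
  let x := Order.min m (ceilz a d) in
  let y := Order.min m (ceilz (a + x + s) (d + 1)) in
  x <= y /\ y <= x + s.
Proof.
move=> d_gt0 s_ge0 x y.
have d1_gt0 : 0 < d + 1 by lia.
have x_le_m : x <= m by rewrite ge_min lexx.
have x_le_ceil : x <= ceilz a d by rewrite ge_min lexx orbT.
split.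
- rewrite le_min x_le_m /= le_ceilz //.
  by move: x_le_ceil; rewrite le_ceilz // => ?; nia.
- have y_le_m : y <= m by rewrite ge_min lexx.
  have y_le_ceil : y <= ceilz (a + x + s) (d + 1) by rewrite ge_min lexx orbT.
  have [x_eq_m|x_eq_ceil] : x = m \/ x = ceilz a d.
    by rewrite /x; case: (leP m (ceilz a d)); [left|right].
  + lia.
  + have a_le : a <= x * d by rewrite -ceilz_le // -x_eq_ceil.
    have : ceilz (a + x + s) (d + 1) <= x + s by rewrite ceilz_le //; nia.
    lia.
Qed.

Section Recursion.
Variables (n m : nat) (lam : nat -> nat).

Lemma ktab_eq e a b : (n - e < a <= n)%N ->
  ktab n m lam e a b = krow n m lam (ktab n m lam (n - a)) a n.+1 b.
Proof.
elim: e a => [|e IH] a /=; first lia.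
move=> a_range; case: eqP => [eq_dn|neq_dn]; first by rewrite eq_dn subKn //; lia.
by apply: IH; lia.
Qed.

Lemma krow_eq K i d l : (n - d < l <= n)%N ->
  krow n m lam K i d l = kform n m lam K i (krow n m lam K i (n - l)) l.
Proof.
elim: d l => [|d IH] l /=; first lia.
move=> l_range; case: eqP => [eq_dn|neq_dn]; first by rewrite eq_dn subKn //; lia.
by apply: IH; lia.
Qed.

Lemma kij_rec i j : (1 <= i <= j)%N -> (j <= n)%N ->
  kij n m lam i j = Order.min (m%:Z)
    (ceilz ((lam i)%:Z - (\sum_(j.+1 <= l < n.+1) kij n m lam i l)
              + (\sum_(i.+1 <= l < j.+1) kij n m lam l j))
           (j%:Z - i%:Z + 1)).
Proof.
move=> ij jn; rewrite /kij ktab_eq; last lia.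
rewrite krow_eq; last lia.
congr (Order.min _ (ceilz (_ - _ + _) _)); apply: eq_big_nat => l l_range.
- rewrite krow_eq; last lia.
  rewrite ktab_eq; last lia.
  by rewrite krow_eq //; lia.
- by rewrite ktab_eq; [rewrite ktab_eq //|]; lia.
Qed.

End Recursion.

Section AdjacentRows.
Variables (n m : nat) (lam : nat -> nat) (i : nat).
Hypothesis i_ge1 : (1 <= i)%N.

Let k := kij n m lam.

Definition row_tail (r j : nat) : int := \sum_(j.+1 <= l < n.+1) k r l.

Definition slack (j : nat) : int :=
  ((lam i)%:Z - row_tail i j) - ((lam i.+1)%:Z - row_tail i.+1 j).

Lemma kij_adjacent_bounds j : (i < j <= n)%N -> 0 <= slack j ->
  k i.+1 j <= k i j /\ k i j <= k i.+1 j + slack j.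
Proof.
move=> j_range s_ge0.
rewrite /k (kij_rec n m lam i j) ?(big_ltn (m := i.+1)); [|lia..].
rewrite (kij_rec n m lam i.+1 j); [|lia|lia].
rewrite -/(row_tail i j) -/(row_tail i.+1 j) -/k.
set x := Order.min _ _.
have -> : (j%:Z - i%:Z + 1) = (j%:Z - (i.+1)%:Z + 1) + 1 by lia.
have -> : (lam i)%:Z - row_tail i j + (x + \sum_(i.+2 <= l < j.+1) k l j)
   = ((lam i.+1)%:Z - row_tail i.+1 j + \sum_(i.+2 <= l < j.+1) k l j)
     + x + slack j by rewrite /slack; ring.
by apply: min_ceilz_shift => //; lia.
Qed.

Lemma slack_pred j : (0 < j <= n)%N ->
  slack j.-1 = slack j - k i j + k i.+1 j.
Proof.
move=> j_range; rewrite /slack /row_tail prednK; last lia.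
by rewrite !(big_ltn (m := j)); [ring|lia..].
Qed.

Lemma slack_ge0 j : (lam i.+1 <= lam i)%N -> (i < j <= n)%N -> 0 <= slack j.
Proof.
move=> lam_i j_range; have -> : j = (n - (n - j))%N by lia.
have : (n - j < n - i)%N by lia.
elim: (n - j)%N => [|t IH] t_bound.
  by rewrite subn0 /slack /row_tail !big_geq // !subr0 subr_ge0 lez_nat.
have t_range : (i < n - t <= n)%N by lia.
have [_ le_slack] := kij_adjacent_bounds (n - t) t_range (IH (ltnW t_bound)).
have -> : (n - t.+1 = (n - t).-1)%N by lia.
by rewrite slack_pred; lia.
Qed.

End AdjacentRows.

Theorem lemma4p6 (n m : nat) (lam : nat -> nat) :
  (0 < n)%N -> (0 < m)%N -> in_Pmn n m lam ->
  forall i j : nat, (1 <= i)%N -> (i < j)%N -> (j <= n)%N ->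
    kij n m lam i.+1 j <= kij n m lam i j.
Proof.
move=> _ _ [lam_noninc _] i j i_ge1 ij jn.
have lam_i : (lam i.+1 <= lam i)%N by apply: lam_noninc; lia.
have j_range : (i < j <= n)%N by lia.
have s_ge0 := slack_ge0 n m lam i i_ge1 j lam_i j_range.
by have [] := kij_adjacent_bounds n m lam i i_ge1 j j_range s_ge0.
Qed.
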